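(* Let $K$ be a field of characteristic $0$ and let $m=x_1^{\alpha_1}\cdots x_n^{\alpha_n}$ be a monomial with $\alpha_i\ge 1$ for all $i$. The group of invariants $\{A\in GL_n(K): m(A.x)=m(x)\}$ of $m$ is generated by: (i) the diagonal matrices $\mathrm{diag}(\lambda_1,\ldots,\lambda_n)$ with $\prod_{i=1}^n\lambda_i^{\alpha_i}=1$; (ii) the permutation matrices which map each variable $x_i$ to a variable $x_{\pi(i)}$ with $\alpha_i=\alpha_{\pi(i)}$.
   Context: $m(A.x)$ denotes the polynomial obtained from $m$ by the linear change of variables $x\mapsto Ax$. *)

From HB Require Import structures.
From mathcomp Require Import all_boot all_order all_algebra all_fingroup.
From mathcomp Require Import mpoly.
Set Implicit Arguments. Unset Strict Implicit. Unset Printing Implicit Defensive.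
Import GRing.Theory.
Local Open Scope ring_scope.

Definition monom (K : fieldType) (n : nat) (alpha : 'I_n -> nat) : {mpoly K[n]} :=
  \prod_(i < n) 'X_i ^+ alpha i.

Definition lin_forms (K : fieldType) (n : nat) (A : 'M[K]_n) : n.-tuple {mpoly K[n]} :=
  [tuple \sum_(j < n) A i j *: 'X_j | i < n].

Definition lin_change (K : fieldType) (n : nat) (A : 'M[K]_n) (p : {mpoly K[n]}) :
  {mpoly K[n]} := comp_mpoly (lin_forms A) p.

Inductive gen_by (K : fieldType) (n : nat) (S : 'M[K]_n -> Prop) : 'M[K]_n -> Prop :=
  | gen_one : gen_by S 1%:M
  | gen_in A : S A -> gen_by S A
  | gen_mul A B : gen_by S A -> gen_by S B -> gen_by S (A *m B)
  | gen_inv A : gen_by S A -> gen_by S (invmx A).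

Definition diag_gen (K : fieldType) (n : nat) (alpha : 'I_n -> nat) (A : 'M[K]_n) : Prop :=
  exists d : 'rV[K]_n, A = diag_mx d /\ \prod_(i < n) d 0 i ^+ alpha i = 1.

Definition perm_gen (K : fieldType) (n : nat) (alpha : 'I_n -> nat) (A : 'M[K]_n) : Prop :=
  exists s : 'S_n, A = perm_mx s /\ forall i, alpha i = alpha (s i).

Definition invariant_gens (K : fieldType) (n : nat) (alpha : 'I_n -> nat) (A : 'M[K]_n) : Prop :=
  diag_gen alpha A \/ perm_gen alpha A.

From HB Require Import structures.
From mathcomp Require Import all_boot all_order all_algebra all_fingroup.
From mathcomp Require Import mpoly.
Set Implicit Arguments.
Unset Strict Implicit.
Unset Printing Implicit Defensive.

Import GRing.Theory.
Local Open Scope ring_scope.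

(* Substituting x_j := 0, i.e. changing variables by diag(1,..,0,..,1), kills
   m, hence also m(A.x); as K[x] is a domain, some linear form (A.x)_i then
   involves x_j only.  An invertible A with this property for every j is a
   monomial matrix diag(d) * P_s, and m(A.x) = (prod_i d_i^alpha_i) x^(alpha o s^-1)
   equals m exactly when diag(d) and P_s are generators. *)

Lemma comp_mpolyA (R : comNzRingType) (n k l : nat) (p : {mpoly R[n]})
    (lp : n.-tuple {mpoly R[k]}) (lq : k.-tuple {mpoly R[l]}) :
  comp_mpoly lq (comp_mpoly lp p) =
  comp_mpoly [tuple comp_mpoly lq (tnth lp i) | i < n] p.
Proof.
rewrite (comp_mpolyEX p lp) (comp_mpolyEX p) raddf_sum /=; apply: eq_bigr => m _.
rewrite comp_mpolyZ !comp_mpolyX rmorph_prod /=; congr (_ *: _).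
by apply: eq_bigr => i _; rewrite rmorphXn tnth_mktuple.
Qed.

Lemma mcoeff_lin_form (R : nzRingType) (n : nat) (c : 'I_n -> R) (k : 'I_n) :
  (\sum_j c j *: 'X_j : {mpoly R[n]})@_U_(k) = c k.
Proof.
rewrite raddf_sum (bigD1 k) //= big1 => [|j /negbTE jk].
  by rewrite mcoeffZ mcoeffXU eqxx mulr1 addr0.
by rewrite mcoeffZ mcoeffXU jk mulr0.
Qed.

Section MonomialMatrix.
Variables (R : comUnitRingType) (n : nat).
Implicit Type A : 'M[R]_n.

Lemma unitmx_row_neq0 A :
  A \in unitmx -> forall i, exists k, A i k != 0.
Proof.
move=> uA i; apply/existsP; apply: contraLR uA; rewrite negb_exists => /forallP A0.
rewrite unitmxE (expand_det_row _ i) big1 ?unitr0 // => k _.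
by move/negPn/eqP: (A0 k) ->; rewrite mul0r.
Qed.

Lemma unitmx_diag_perm A :
  A \in unitmx -> (forall j, exists i, forall k, k != j -> A i k = 0) ->
  exists d s, A = diag_mx d *m perm_mx s.
Proof.
move=> uA /fin_all_exists [f supp_f].
have f_inj : injective f.
  move=> j j' fjj'; apply/eqP; apply: contraT => jj'.
  have [k] := unitmx_row_neq0 uA (f j); apply: contra_neqT => _.
  have [->|kj] := eqVneq k j; last exact: supp_f.
  by rewrite fjj'; apply: supp_f.
pose s := (perm f_inj)^-1%g.
have supp_s i k : k != s i -> A i k = 0.
  by rewrite -{2}[i](permKV (perm f_inj)) permE; apply: supp_f.
exists (\row_i A i (s i)), s; apply/matrixP => i k.
rewrite mul_diag_mx perm_mxEsub !mxE.
have [<-|ks] := eqVneq (s i) k; first by rewrite mulr1.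
by rewrite mulr0 supp_s // eq_sym.
Qed.

End MonomialMatrix.

Section LinChange.
Variables (K : fieldType) (n : nat).
Implicit Types (A B : 'M[K]_n) (p : {mpoly K[n]}) (alpha : 'I_n -> nat).

Lemma tnth_lin_forms A i : tnth (lin_forms A) i = \sum_j A i j *: 'X_j.
Proof. exact: tnth_mktuple. Qed.

Lemma tnth_lin_forms_single A i j :
  (forall k, k != j -> A i k = 0) -> tnth (lin_forms A) i = A i j *: 'X_j.
Proof.
move=> supp; rewrite tnth_lin_forms (bigD1 j) //= big1 ?addr0 // => k kj.
by rewrite supp // scale0r.
Qed.

Lemma lin_change_mulmx A B p :
  lin_change A (lin_change B p) = lin_change (B *m A) p.
Proof.
rewrite /lin_change comp_mpolyA; congr comp_mpoly.
apply: eq_from_tnth => i; rewrite tnth_mktuple !tnth_lin_forms raddf_sum /=.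
under eq_bigr => j _ do
  rewrite comp_mpolyZ comp_mpolyXU -tnth_nth tnth_lin_forms scaler_sumr.
rewrite exchange_big /=; apply: eq_bigr => k _.
by rewrite mxE scaler_suml; apply: eq_bigr => j _; rewrite scalerA.
Qed.

Lemma lin_changeZ A (c : K) p : lin_change A (c *: p) = c *: lin_change A p.
Proof. exact: comp_mpolyZ. Qed.

Lemma lin_change1 p : lin_change 1%:M p = p.
Proof.
rewrite /lin_change -[RHS]comp_mpoly_id; congr comp_mpoly.
apply: eq_from_tnth => i; rewrite tnth_mktuple (tnth_lin_forms_single (j := i)).
  by rewrite mxE eqxx scale1r.
by move=> k ki; rewrite mxE eq_sym (negbTE ki).
Qed.

Lemma lin_change_monom A alpha :
  lin_change A (monom K alpha) = \prod_i tnth (lin_forms A) i ^+ alpha i.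
Proof.
rewrite /lin_change rmorph_prod; apply: eq_bigr => i _.
by rewrite rmorphXn /= comp_mpolyXU -tnth_nth.
Qed.

Lemma lin_change_diag_monom (d : 'rV[K]_n) alpha :
  lin_change (diag_mx d) (monom K alpha) =
  (\prod_i d 0 i ^+ alpha i) *: monom K alpha.
Proof.
rewrite lin_change_monom /monom -scaler_prod; apply: eq_bigr => i _.
rewrite (tnth_lin_forms_single (j := i)) => [|k ki]; rewrite mxE.
  by rewrite eqxx mulr1n exprZn.
by rewrite eq_sym (negbTE ki) mulr0n.
Qed.

Lemma lin_change_perm_monom (s : 'S_n) alpha :
  lin_change (perm_mx s) (monom K alpha) = monom K (fun i => alpha ((s^-1)%g i)).
Proof.
rewrite lin_change_monom /monom [RHS](reindex_inj (@perm_inj _ s)) /=.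
apply: eq_bigr => i _; rewrite permK (tnth_lin_forms_single (j := s i)).
  by rewrite perm_mxEsub !mxE eqxx scale1r.
by move=> k ks; rewrite perm_mxEsub !mxE eq_sym (negbTE ks).
Qed.

Lemma lin_change_monom_eq0 B alpha :
  lin_change B (monom K alpha) = 0 -> exists i, forall k, B i k = 0.
Proof.
rewrite lin_change_monom => /eqP /prodf_eq0 [i _ /[!expf_eq0] /andP [_ /eqP Bi0]].
by exists i => k; rewrite -(mcoeff_lin_form (B i) k) -tnth_lin_forms Bi0 mcoeff0.
Qed.

Lemma monomE alpha : monom K alpha = 'X_[[multinom alpha i | i < n]].
Proof. by rewrite mpolyXE_id; apply: eq_bigr => i _; rewrite mnmE. Qed.

Lemma scale_monom_eq (c : K) alpha beta :
  c *: monom K alpha = monom K beta -> c = 1 /\ alpha =1 beta.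
Proof.
rewrite !monomE => /(congr1 (mcoeff [multinom beta i | i < n])).
rewrite mcoeffZ !mcoeffX eqxx; case: eqP => [eq_ab|_]; last first.
  by rewrite mulr0 => /eqP; rewrite eq_sym oner_eq0.
by rewrite mulr1; split=> // i; move/mnmP/(_ i): eq_ab; rewrite !mnmE.
Qed.

End LinChange.

Section MonomialInvariants.
Variables (K : fieldType) (n : nat) (alpha : 'I_n -> nat).
Hypothesis alpha_pos : forall i, (1 <= alpha i)%N.
Implicit Type A : 'M[K]_n.
Local Notation m := (monom K alpha).

Lemma diag_gen_unitmx A : diag_gen alpha A -> A \in unitmx.
Proof.
case=> d [-> prod_d]; rewrite unitmxE det_diag unitfE.
apply/prodf_neq0 => i _; apply: contra_eq_neq prod_d => di0.
by rewrite (bigD1 i) //= di0 expr0n eqn0Ngt alpha_pos mul0r eq_sym oner_neq0.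
Qed.

Lemma invariant_gens_fix A :
  invariant_gens alpha A -> A \in unitmx /\ lin_change A m = m.
Proof.
case=> [dA | [s [-> alpha_s]]].
  split; first exact: diag_gen_unitmx.
  by case: dA => d [-> prod_d]; rewrite lin_change_diag_monom prod_d scale1r.
split; first exact: unitmx_perm.
rewrite lin_change_perm_monom /monom; apply: eq_bigr => i _.
by rewrite alpha_s permKV.
Qed.

Lemma gen_by_fix A :
  gen_by (invariant_gens alpha) A -> A \in unitmx /\ lin_change A m = m.
Proof.
elim=> [|B /invariant_gens_fix //|B C _ [uB fixB] _ [uC fixC]|B _ [uB fixB]].
- by rewrite unitmx1 lin_change1.
- by rewrite unitmx_mul uB uC -lin_change_mulmx fixB fixC.
- by rewrite unitmx_inv uB -{1}fixB lin_change_mulmx mulmxV // lin_change1.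
Qed.

Lemma fix_row_support A :
  lin_change A m = m -> forall j, exists i, forall k, k != j -> A i k = 0.
Proof.
move=> fixA j; pose e : 'rV[K]_n := \row_k (k != j)%:R.
have : lin_change (A *m diag_mx e) m = 0.
  rewrite -lin_change_mulmx fixA lin_change_diag_monom (bigD1 j) //= mxE eqxx.
  by rewrite expr0n eqn0Ngt alpha_pos mul0r scale0r.
case/lin_change_monom_eq0 => i Ae0; exists i => k kj.
by move: (Ae0 k); rewrite mul_mx_diag !mxE kj mulr1.
Qed.

Lemma fix_diag_perm (d : 'rV[K]_n) (s : 'S_n) :
  lin_change (diag_mx d *m perm_mx s) m = m ->
  diag_gen alpha (diag_mx d) /\ perm_gen alpha (perm_mx s : 'M[K]_n).
Proof.
rewrite -lin_change_mulmx lin_change_diag_monom lin_changeZ lin_change_perm_monom.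
case/scale_monom_eq => prod_d alpha_s; split; first by exists d.
by exists s; split=> // i; rewrite -[in RHS]alpha_s /= permK.
Qed.

End MonomialInvariants.

Theorem lemma4 (K : fieldType) (n : nat) (alpha : 'I_n -> nat) :
  [pchar K] =i pred0 ->
  (forall i, (1 <= alpha i)%N) ->
  forall A : 'M[K]_n,
    (A \in unitmx /\ lin_change A (monom K alpha) = monom K alpha) <->
    gen_by (invariant_gens alpha) A.
Proof.
move=> _ alpha_pos A; split; last exact: gen_by_fix.
case=> uA fixA; have [d [s AE]] := unitmx_diag_perm uA (fix_row_support alpha_pos fixA).
rewrite AE in fixA *; have [diag_d perm_s] := fix_diag_perm fixA.
by apply: gen_mul; apply: gen_in; [left | right].
Qed.
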